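(* Let $\alpha\approx 2.956$ be Otter's tree constant. Fix $0<\varepsilon<\alpha$. There exist $\Delta=\Delta(\varepsilon)\in\mathbb N$ and $\rho=\rho(\varepsilon)>0$ such that, for all sufficiently large $n$, the number of pairwise non-isomorphic trees on $n$ vertices with maximum degree at most $\Delta$ and at least $\rho n$ leaves is at least $(\alpha-\varepsilon)^n$.
   Context: Otter's tree constant $\alpha$ is the constant such that the number of pairwise non-isomorphic unlabelled trees on $n$ vertices is $(1+o(1))Cn^{-5/2}\alpha^n$ for an absolute constant $C$; equivalently, the number $a_k$ of non-isomorphic rooted unlabelled trees on $k$ vertices satisfies $a_k=(1+o(1))C'k^{-3/2}\alpha^k$, so $a_k^{1/k}\to\alpha$. Trees are counted up to graph isomorphism (unlabelled). *)

From HB Require Import structures.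
From mathcomp Require Import all_boot all_order all_algebra all_fingroup.
From mathcomp Require Import all_classical all_reals all_analysis.
Set Implicit Arguments. Unset Strict Implicit. Unset Printing Implicit Defensive.
Import Order.TTheory GRing.Theory Num.Theory.

Definition graph (n : nat) := {ffun 'I_n * 'I_n -> bool}.

Definition adj n (G : graph n) : rel 'I_n := fun x y => G (x, y).

Definition simple_graph n (G : graph n) : bool :=
  [forall x, ~~ adj G x x] && [forall x, forall y, adj G x y == adj G y x].

Definition connected_graph n (G : graph n) : bool :=
  [forall x, forall y, connect (adj G) x y].

Definition acyclic_graph n (G : graph n) : Prop :=
  forall c : seq 'I_n, 2 < size c -> ~~ ucycleb (adj G) c.

Definition is_tree n (G : graph n) : bool :=
  [&& simple_graph G, connected_graph G & `[< acyclic_graph G >]].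

Definition deg n (G : graph n) (x : 'I_n) : nat := #|[set y | adj G x y]|.

Definition max_deg_le n (G : graph n) (D : nat) : bool := [forall x, deg G x <= D].

Definition nleaves n (G : graph n) : nat := #|[set x | deg G x == 1]|.

Definition isomorphic n (G H : graph n) : Prop :=
  exists s : {perm 'I_n}, forall x y, adj G x y = adj H (s x) (s y).

Definition rooted_isomorphic n (G H : graph n * 'I_n) : Prop :=
  exists s : {perm 'I_n}, s G.2 = H.2 /\
     forall x y, adj G.1 x y = adj H.1 (s x) (s y).

Definition num_unlabelled_trees n (P : graph n -> bool) : nat :=
  #|[set [set H : graph n | is_tree H && `[< isomorphic G H >]] |
       G in [set G : graph n | is_tree G && P G]]|.

Definition num_rooted_trees k : nat :=
  #|[set [set H : graph k * 'I_k | is_tree H.1 && `[< rooted_isomorphic G H >]] |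
       G in [set G : graph k * 'I_k | is_tree G.1]]|.

(* A rooted tree on k vertices is hung from a bead, i.e. a new vertex that also
   carries a pendant leaf, and m beads are strung onto a rooted path with
   between k + 3 and 2k + 4 vertices.  This gives trees on n vertices, with
   n - m (k + 2) the size of the path, of maximum degree at most k + 4 and with
   at least m leaves.  Distinct sequences of rooted classes of the hanging
   trees give rooted trees that are not isomorphic: a rooted isomorphism has
   to map the branch at the root containing the rest of the chain (more than
   k + 2 vertices) onto its counterpart, and then the branch holding the
   hanging tree (k > 2 vertices) onto its counterpart.  Forgetting the root
   loses a factor at most n, so a_k^m <= n * #(unlabelled trees).  As
   a_k^(1/k) -> alpha, some k >= 3 has a_k >= 4 (alpha - eps)^(k + 2), and then
   a_k^m >= n (alpha - eps)^n for every large n. *)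

From HB Require Import structures.
From mathcomp Require Import all_boot all_order all_algebra all_fingroup.
From mathcomp Require Import all_classical all_reals all_analysis.
From mathcomp Require Import zify lra.
Import Order.TTheory GRing.Theory Num.Theory numFieldNormedType.Exports.
Set Implicit Arguments. Unset Strict Implicit. Unset Printing Implicit Defensive.

Local Open Scope nat_scope.

Lemma connect_homo (T T' : finType) (e : rel T) (e' : rel T') (f : T -> T') :
  {homo f : x y / e x y >-> e' x y} -> {homo f : x y / connect e x y >-> connect e' x y}.
Proof.
move=> fe x y /connectP[p ep ->]; apply/connectP.
by exists (map f p); [exact: homo_path ep | rewrite last_map].
Qed.

Lemma simple_graphP n (G : graph n) :
  reflect (irreflexive (adj G) /\ symmetric (adj G)) (simple_graph G).
Proof.
apply: (iffP andP) => [[/forallP irr /forallP sym] | [irr sym]]; split.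
- by move=> x; apply/negbTE.
- by move=> x y; apply/eqP; have /forallP := sym x; apply.
- by apply/forallP => x; rewrite irr.
- by apply/forallP => x; apply/forallP => y; rewrite sym.
Qed.

Lemma treeP n (G : graph n) :
  reflect [/\ simple_graph G, forall x y, connect (adj G) x y & acyclic_graph G]
          (is_tree G).
Proof.
apply: (iffP and3P) => [[sG /forallP cG /asboolP aG] | [sG cG aG]]; split=> //.
- by move=> x y; have /forallP := cG x; apply.
- by apply/forallP => x; apply/forallP => y; apply: cG.
- exact/asboolP.
Qed.

Lemma ucycle_map_inj n m (H : graph n) (H' : graph m) (f : 'I_n -> 'I_m) c :
  injective f -> (forall x y, adj H' (f x) (f y) = adj H x y) ->
  ucycleb (adj H') (map f c) = ucycleb (adj H) c.
Proof. by move=> f_inj f_adj; rewrite /ucycleb (mono_cycle f_adj) (map_inj_uniq f_inj). Qed.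

Lemma split_lshift a b (x : 'I_a) : fintype.split (lshift b x) = inl x.
Proof. exact: (unsplitK (inl _ x)). Qed.

Lemma split_rshift a b (y : 'I_b) : fintype.split (rshift a y) = inr y.
Proof. exact: (unsplitK (inr _ y)). Qed.

Lemma ltn_lshift a b (x : 'I_a) : lshift b x < a.
Proof. exact: (ltn_ord x). Qed.

Lemma ltn_rshift a b (y : 'I_b) : (rshift a y < a) = false.
Proof. by rewrite /= ltnNge leq_addr. Qed.

Lemma all_ltn_lshift a b (c : seq 'I_(a + b)) :
  all (fun p : 'I_(a + b) => p < a) c -> exists c', c = map (lshift b) c'.
Proof.
elim: c => [|p c IHc] /=; first by exists [::].
case/andP; case: (split_ordP p) => [x ->|y ->] // _.
by case/IHc => c' ->; exists (x :: c').
Qed.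

Lemma all_geq_rshift a b (c : seq 'I_(a + b)) :
  all (fun p : 'I_(a + b) => a <= p) c -> exists c', c = map (@rshift a b) c'.
Proof.
elim: c => [|p c IHc] /=; first by exists [::].
case/andP; case: (split_ordP p) => [x ->|y ->]; first by rewrite leqNgt ltn_lshift.
by move=> _ /IHc[c' ->]; exists (y :: c').
Qed.

Lemma card_split_ord a b (P : pred 'I_(a + b)) :
  #|[set p | P p]| = #|[set x | P (lshift b x)]| + #|[set y | P (rshift a y)]|.
Proof.
rewrite -!sum1_card big_mkcond big_split_ord /=.
by congr (_ + _); rewrite [RHS]big_mkcond; apply: eq_bigr => i _; rewrite !inE.
Qed.

Definition glue a b (G1 : graph a) (G2 : graph b) (u : 'I_a) (v : 'I_b) : graph (a + b) :=
  [ffun p => match fintype.split p.1, fintype.split p.2 with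
   | inl x, inl y => G1 (x, y)
   | inr x, inr y => G2 (x, y)
   | inl x, inr y => (x == u) && (y == v)
   | inr x, inl y => (x == v) && (y == u) end].

Definition nleaves_off n (G : graph n) (r : 'I_n) : nat :=
  #|[set x | (deg G x == 1) && (x != r)]|.

Definition avoid_rel n (G : graph n) (r : 'I_n) : rel 'I_n :=
  fun p q => [&& adj G p q, p != r & q != r].

Definition branch n (G : graph n) (r x : 'I_n) : {set 'I_n} :=
  [set y | connect (avoid_rel G r) x y].

Lemma branch_iso n (H H' : graph n) (s : {perm 'I_n}) r x :
  (forall p q, adj H p q = adj H' (s p) (s q)) ->
  s @: branch H r x \subset branch H' (s r) (s x).
Proof.
move=> sH; apply/fintype.subsetP => _ /imsetP[y + ->]; rewrite !inE.
apply: connect_homo => p q /and3P[pq pr qr].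
by rewrite /avoid_rel -sH pq !(inj_eq perm_inj) pr qr.
Qed.

Section Glue.
Variables (a b : nat) (G1 : graph a) (G2 : graph b) (u : 'I_a) (v : 'I_b).
Let G := glue G1 G2 u v.

Lemma adj_glue_ll x y : adj G (lshift b x) (lshift b y) = adj G1 x y.
Proof. by rewrite /adj ffunE /= !split_lshift. Qed.

Lemma adj_glue_rr x y : adj G (rshift a x) (rshift a y) = adj G2 x y.
Proof. by rewrite /adj ffunE /= !split_rshift. Qed.

Lemma adj_glue_lr x y : adj G (lshift b x) (rshift a y) = (x == u) && (y == v).
Proof. by rewrite /adj ffunE /= split_lshift split_rshift. Qed.

Lemma adj_glue_rl x y : adj G (rshift a x) (lshift b y) = (x == v) && (y == u).
Proof. by rewrite /adj ffunE /= split_lshift split_rshift. Qed.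

Lemma glue_simple : simple_graph G1 -> simple_graph G2 -> simple_graph G.
Proof.
move=> /simple_graphP[irr1 sym1] /simple_graphP[irr2 sym2]; apply/simple_graphP; split.
  by move=> p; case: (split_ordP p) => x ->; rewrite ?adj_glue_ll ?adj_glue_rr.
move=> p q; case: (split_ordP p) => x ->; case: (split_ordP q) => y ->.
- by rewrite !adj_glue_ll sym1.
- by rewrite adj_glue_lr adj_glue_rl andbC.
- by rewrite adj_glue_lr adj_glue_rl andbC.
- by rewrite !adj_glue_rr sym2.
Qed.

Lemma glue_connect_root :
  (forall x y, connect (adj G1) x y) -> (forall x y, connect (adj G2) x y) ->
  forall p, connect (adj G) p (lshift b u).
Proof.
move=> c1 c2 p; case: (split_ordP p) => [x|y] ->.
  by apply: (@connect_homo _ _ _ _ (lshift b) _ _ _ (c1 x u)) => ? ?; rewrite adj_glue_ll.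
apply: (connect_trans (@connect_homo _ _ _ _ (@rshift a b) _ _ _ (c2 y v))).
  by move=> ? ?; rewrite adj_glue_rr.
by apply: connect1; rewrite adj_glue_rl !eqxx.
Qed.

Lemma glue_adj_side p q :
  p != lshift b u -> q != lshift b u -> adj G p q -> (p < a) = (q < a).
Proof.
case: (split_ordP p) => x ->; case: (split_ordP q) => y ->;
  rewrite ?ltn_lshift ?ltn_rshift // eq_lshift.
- by move=> /negbTE xu _; rewrite adj_glue_lr xu.
- by move=> _ /negbTE yu; rewrite adj_glue_rl yu andbF.
Qed.

Lemma glue_path_side x p : path (adj G) x p -> lshift b u \notin x :: p ->
  all (fun q : 'I_(a + b) => (q < a) == (x < a)) p.
Proof.
elim: p x => //= y p IHp x /andP[xy yp].
rewrite !inE !negb_or => /and3P[ux uy up].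
rewrite eq_sym in ux; rewrite eq_sym in uy.
rewrite (glue_adj_side ux uy xy) eqxx /=.
by apply: IHp; rewrite // inE negb_or eq_sym uy.
Qed.

Lemma glue_one_side_acyclic (left : bool) c :
  acyclic_graph G1 -> acyclic_graph G2 -> 2 < size c ->
  all (fun p : 'I_(a + b) => (p < a) == left) c -> ~~ ucycleb (adj G) c.
Proof.
move=> ac1 ac2 c_gt2; case: left => /allP c_side.
  have /all_ltn_lshift[c' Ec] : all (fun p : 'I_(a + b) => p < a) c.
    by apply/allP => p /c_side/eqP.
  rewrite Ec size_map in c_gt2 *.
  by rewrite (ucycle_map_inj _ (@lshift_inj a b) adj_glue_ll); exact: ac1.
have /all_geq_rshift[c' Ec] : all (fun p : 'I_(a + b) => a <= p) c.
  by apply/allP => p /c_side/eqP/negbT; rewrite -leqNgt.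
rewrite Ec size_map in c_gt2 *.
by rewrite (ucycle_map_inj _ (@rshift_inj a b) adj_glue_rr); exact: ac2.
Qed.

Lemma glue_root_right_nbr (p : 'I_(a + b)) :
  a <= p -> adj G (lshift b u) p || adj G p (lshift b u) -> p = rshift a v.
Proof.
case: (split_ordP p) => [x ->|y ->]; first by rewrite leqNgt ltn_lshift.
by rewrite adj_glue_lr adj_glue_rl eqxx andbT orbb => _ /eqP ->.
Qed.

Lemma glue_root_ucycle y t :
  acyclic_graph G1 -> acyclic_graph G2 -> t != [::] ->
  ~~ ucycleb (adj G) [:: lshift b u, y & t].
Proof.
move=> ac1 ac2 t0; apply/negP => /andP[cyc uniq_c]; move: (cyc) (uniq_c).
rewrite /= rcons_path => /and3P[uy yt tu] /and3P[u_yt y_t _].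
have t_side := glue_path_side yt u_yt.
case: (ltnP y a) => y_side.
  have c_gt2 : 2 < size [:: lshift b u, y & t] by rewrite /= !ltnS lt0n size_eq0.
  rewrite y_side in t_side.
  have all_left : all (fun q : 'I_(a + b) => (q < a) == true) [:: lshift b u, y & t].
    by rewrite /= ltn_ord y_side t_side.
  by move: (glue_one_side_acyclic ac1 ac2 c_gt2 all_left); rewrite /ucycleb cyc uniq_c.
have Ey : y = rshift a v by apply: glue_root_right_nbr; rewrite ?uy.
have t_last : last y t \in t.
  by case Et : t => [|w s]; [move: t0; rewrite Et | exact: (mem_last w s)].
have last_side : a <= last y t.
  by rewrite leqNgt (eqP (allP t_side _ t_last)) -leqNgt.
have Elast : last y t = rshift a v by apply: glue_root_right_nbr; rewrite ?tu ?orbT.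
by move: y_t; rewrite Ey -Elast t_last.
Qed.

Lemma glue_acyclic : acyclic_graph G1 -> acyclic_graph G2 -> acyclic_graph G.
Proof.
move=> ac1 ac2 c c_gt2; apply/negP => /andP[cyc uniq_c].
case: c c_gt2 cyc uniq_c => [//|x p] c_gt2 cyc uniq_c.
have [root_in | root_out] := boolP (lshift b u \in x :: p).
  have [i p' rot_i] := rot_to root_in.
  have: ucycleb (adj G) (lshift b u :: p') by rewrite -rot_i /ucycleb rot_cycle rot_uniq cyc.
  have := size_rot i (x :: p); rewrite rot_i; move: c_gt2.
  case: p' {rot_i} => [|y t] /= c_gt2 sz; first by rewrite -sz in c_gt2.
  apply/negP/glue_root_ucycle => //; apply: contraTneq c_gt2 => t0.
  by rewrite -sz t0.
have x_side : all (fun q : 'I_(a + b) => (q < a) == (x < a)) (x :: p).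
  have := glue_path_side cyc; rewrite all_rcons /= eqxx; apply.
  by rewrite in_cons mem_rcons orb_idl // => /eqP ->; exact: mem_head.
by move: (glue_one_side_acyclic ac1 ac2 c_gt2 x_side); rewrite /ucycleb cyc uniq_c.
Qed.

Lemma glue_tree : is_tree G1 -> is_tree G2 -> is_tree G.
Proof.
move=> /treeP[s1 c1 ac1] /treeP[s2 c2 ac2]; apply/treeP; split.
- exact: glue_simple.
- have sym : symmetric (adj G) by case/simple_graphP: (glue_simple s1 s2).
  move=> p q; apply: connect_trans (glue_connect_root c1 c2 p) _.
  by rewrite (sym_connect_sym sym) glue_connect_root.
- exact: glue_acyclic.
Qed.

Lemma deg_glue_l x : deg G (lshift b x) = deg G1 x + (x == u).
Proof.
rewrite /deg card_split_ord; congr (_ + _).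
  by apply: eq_card => y; rewrite !inE adj_glue_ll.
case: eqP => [->|/eqP/negbTE xu] /=.
  by rewrite -(cards1 v); apply: eq_card => y; rewrite !inE adj_glue_lr eqxx.
by apply: eq_card0 => y; rewrite !inE adj_glue_lr xu.
Qed.

Lemma deg_glue_r y : deg G (rshift a y) = deg G2 y + (y == v).
Proof.
rewrite /deg card_split_ord [RHS]addnC; congr (_ + _); last first.
  by apply: eq_card => z; rewrite !inE adj_glue_rr.
case: eqP => [->|/eqP/negbTE yv] /=.
  by rewrite -(cards1 u); apply: eq_card => z; rewrite !inE adj_glue_rl eqxx.
by apply: eq_card0 => z; rewrite !inE adj_glue_rl yv.
Qed.

Lemma nleaves_off_glue :
  nleaves_off G (lshift b u) = nleaves_off G1 u + nleaves_off G2 v + (deg G2 v == 0).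
Proof.
rewrite /nleaves_off card_split_ord -addnA; congr (_ + _).
  apply: eq_card => x; rewrite !inE deg_glue_l eq_lshift.
  by case: (x =P u) => [->|_] /=; rewrite ?andbF ?andbT ?addn0.
rewrite (cardsD1 v) !inE deg_glue_r eqxx addn1 eqSS eq_rlshift andbT addnC.
congr (_ + _); apply: eq_card => y; rewrite !inE deg_glue_r eq_rlshift andbT.
by case: (y =P v) => [->|_] /=; rewrite ?andbF ?andbT ?addn0.
Qed.

Lemma glue_branch_side x p : p \in branch G (lshift b u) x -> (p < a) = (x < a).
Proof.
have side_closed :
    fingraph.closed (avoid_rel G (lshift b u)) [pred q : 'I_(a + b) | q < a].
  by move=> q q' /and3P[qq' qu q'u]; rewrite !inE (glue_adj_side qu q'u qq').
by rewrite inE => /(closed_connect side_closed); rewrite !inE.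
Qed.

Lemma card_glue_branch_left x : #|branch G (lshift b u) (lshift b x)| <= a.
Proof.
rewrite -[a in _ <= a]card_ord -cardsT -(card_imset _ (@lshift_inj a b)).
apply/subset_leq_card/fintype.subsetP => p /glue_branch_side; rewrite ltn_lshift.
by case: (split_ordP p) => [x' ->|//] _; exact: imset_f.
Qed.

Lemma glue_branch_right : is_tree G2 ->
  forall y z, rshift a z \in branch G (lshift b u) (rshift a y).
Proof.
move=> /treeP[_ c2 _] y z; rewrite inE.
apply: (@connect_homo _ _ _ _ (@rshift a b) _ _ _ (c2 y z)) => p q pq.
by rewrite /avoid_rel adj_glue_rr pq !eq_rlshift.
Qed.

End Glue.

(* The branch at the root containing the right part has at least b > a
   vertices, so an isomorphism cannot send it into the left part. *)
Lemma glue_iso_right a b (G1 G1' : graph a) (G2 G2' : graph b) u u' v v'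
    (s : {perm 'I_(a + b)}) :
  is_tree G2 -> a < b -> s (lshift b u) = lshift b u' ->
  (forall p q, adj (glue G1 G2 u v) p q = adj (glue G1' G2' u' v') (s p) (s q)) ->
  forall y, a <= s (rshift a y).
Proof.
move=> t2 ab su s_adj.
have s_branch := branch_iso (lshift b u) (rshift a v) s_adj; rewrite su in s_branch.
have v_right : a <= s (rshift a v).
  have: b <= #|branch (glue G1' G2' u' v') (lshift b u') (s (rshift a v))|.
    apply: leq_trans (subset_leq_card s_branch); rewrite card_imset; last exact: perm_inj.
    rewrite -[b in b <= _]card_ord -cardsT -(card_imset _ (@rshift_inj a b)).
    by apply/subset_leq_card/fintype.subsetP => _ /imsetP[z _ ->]; exact: glue_branch_right.
  case: (split_ordP (s (rshift a v))) => [x -> | y -> _]; last by rewrite /= leq_addr.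
  by move/leq_trans/(_ (card_glue_branch_left _ _ _ _ x)); rewrite leqNgt ab.
move=> y; have y_in := @glue_branch_right a b G1 G2 u v t2 v y.
have /glue_branch_side E := fintype.subsetP s_branch _ (imset_f s y_in).
by rewrite leqNgt E -leqNgt.
Qed.

Lemma perm_sum_split a b (s : {perm 'I_(a + b)}) : (forall y, a <= s (rshift a y)) ->
  exists (s1 : {perm 'I_a}) (s2 : {perm 'I_b}),
    (forall x, s (lshift b x) = lshift b (s1 x)) /\
    (forall y, s (rshift a y) = rshift a (s2 y)).
Proof.
move=> s_right.
pose f2 y := if fintype.split (s (rshift a y)) is inr z then z else y.
have f2E y : s (rshift a y) = rshift a (f2 y).
  have := s_right y; rewrite /f2; case: split_ordP => [x -> | z -> //].
  by rewrite leqNgt ltn_lshift.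
have f2_inj : injective f2.
  by move=> y y' /(congr1 (@rshift a b)); rewrite -!f2E => /perm_inj /rshift_inj.
pose f1 x := if fintype.split (s (lshift b x)) is inl z then z else x.
have f1E x : s (lshift b x) = lshift b (f1 x).
  rewrite /f1; case: split_ordP => [z -> // | z /eqP].
  by rewrite -(permKV (perm f2_inj) z) permE -f2E (inj_eq perm_inj) eq_lrshift.
have f1_inj : injective f1.
  by move=> x x' /(congr1 (lshift b)); rewrite -!f1E => /perm_inj /lshift_inj.
by exists (perm f1_inj), (perm f2_inj); split=> ?; rewrite permE.
Qed.

Definition rglue a b (G : graph a * 'I_a) (H : graph b * 'I_b) : graph (a + b) * 'I_(a + b) :=
  (glue G.1 H.1 G.2 H.2, lshift b G.2).

Lemma rglue_tree a b (G : graph a * 'I_a) (H : graph b * 'I_b) :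
  is_tree G.1 -> is_tree H.1 -> is_tree (rglue G H).1.
Proof. exact: glue_tree. Qed.

Lemma rglue_riso_inv a b (G G' : graph a * 'I_a) (H H' : graph b * 'I_b) :
  a < b -> is_tree H.1 -> rooted_isomorphic (rglue G H) (rglue G' H') ->
  rooted_isomorphic G G' /\ rooted_isomorphic H H'.
Proof.
case: G G' H H' => [g u] [g' u'] [h v] [h' v'] ab /= th [s [/= su s_adj]].
have [s1 [s2 [s1E s2E]]] := perm_sum_split (glue_iso_right th ab su s_adj).
split; [exists s1 | exists s2]; split=> /=.
- by apply: (@lshift_inj a b); rewrite -s1E.
- by move=> x y; rewrite -(adj_glue_ll g h u v) s_adj !s1E adj_glue_ll.
- have := s_adj (lshift b u) (rshift a v).
  by rewrite adj_glue_lr !eqxx su s2E adj_glue_lr eqxx => /esym/eqP.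
- by move=> x y; rewrite -(adj_glue_rr g h u v) s_adj !s2E adj_glue_rr.
Qed.

Lemma riso_refl n (G : graph n * 'I_n) : rooted_isomorphic G G.
Proof. by exists 1%g; split=> [|x y]; rewrite ?perm1. Qed.

Lemma riso_sym n (G H : graph n * 'I_n) : rooted_isomorphic G H -> rooted_isomorphic H G.
Proof.
case=> s [sG sadj]; exists s^-1%g; split; first by rewrite -sG permK.
by move=> x y; rewrite sadj !permKV.
Qed.

Lemma riso_trans n (G H K : graph n * 'I_n) :
  rooted_isomorphic G H -> rooted_isomorphic H K -> rooted_isomorphic G K.
Proof.
case=> s [sG sadj] [t [tH tadj]]; exists (s * t)%g; split; first by rewrite permM sG.
by move=> x y; rewrite sadj tadj !permM.
Qed.

Definition rooted_class {n} (G : graph n * 'I_n) : {set graph n * 'I_n} :=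
  [set H | is_tree H.1 && `[< rooted_isomorphic G H >]].

Definition iso_class {n} (G : graph n) : {set graph n} :=
  [set H | is_tree H && `[< isomorphic G H >]].

Lemma rooted_class_eq n (G H : graph n * 'I_n) :
  rooted_isomorphic G H -> rooted_class G = rooted_class H.
Proof.
move=> GH; apply/setP => K; rewrite !inE; apply: andb_id2l => _.
by apply/asboolP/asboolP => [/(riso_trans (riso_sym GH)) | /(riso_trans GH)].
Qed.

Lemma rooted_class_inj n (G H : graph n * 'I_n) :
  is_tree H.1 -> rooted_class G = rooted_class H -> rooted_isomorphic G H.
Proof.
move=> tH GH; have : H \in rooted_class H by rewrite inE tH; apply/asboolP/riso_refl.
by rewrite -GH inE => /andP[_ /asboolP].
Qed.

Lemma card_imset_factor (T U V : finType) (S : {set T}) (f : T -> U) (g : T -> V) :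
  {in S &, forall x y, g x = g y -> f x = f y} -> #|f @: S| <= #|g @: S|.
Proof.
move=> gf; pose h v := omap f [pick x in S | g x == v].
rewrite -(card_imset _ Some_inj) -imset_comp; apply: leq_trans (leq_imset_card h _).
apply/subset_leq_card/fintype.subsetP => _ /imsetP[x xS ->].
apply/imsetP; exists (g x); first exact: imset_f.
rewrite /h; case: pickP => [y /andP[yS /eqP gyx] | /(_ x)]; first by rewrite /= (gf y x).
by rewrite xS eqxx.
Qed.

(* Up to rooted isomorphism, a rooted tree is determined by its unrooted class
   together with the position of its root on a fixed representative of that
   class; for trees the default values below are never used. *)
Definition class_rep n (U : {set graph n}) : graph n := odflt [ffun => false] [pick H in U].

Definition root_label n (G : graph n * 'I_n) : 'I_n :=
  odflt G.2 [pick r | `[< rooted_isomorphic G (class_rep (iso_class G.1), r) >]].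

Lemma riso_root_label n (G : graph n * 'I_n) :
  is_tree G.1 -> rooted_isomorphic G (class_rep (iso_class G.1), root_label G).
Proof.
move=> tG; have : G.1 \in iso_class G.1.
  by rewrite inE tG; apply/asboolP; exists 1%g => x y; rewrite !perm1.
rewrite /root_label /class_rep; case: pickP => [H + _ | /(_ G.1) -> //].
rewrite inE => /andP[_ /asboolP[s sH]].
case: pickP => [r /asboolP // | /(_ (s G.2)) /negbT /asboolP []].
by exists s.
Qed.

Lemma card_rooted_classes_le n (S : {set graph n * 'I_n}) (P : pred (graph n)) :
  (forall G, G \in S -> is_tree G.1 && P G.1) ->
  #|rooted_class @: S| <= num_unlabelled_trees P * n.
Proof.
move=> SP; pose key (G : graph n * 'I_n) := (iso_class G.1, root_label G).
apply: (leq_trans (card_imset_factor (f := rooted_class) (g := key) _)).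
  move=> G H /SP/andP[tG _] /SP/andP[tH _] [eU er]; apply: rooted_class_eq.
  have := riso_root_label tH; rewrite -eU -er => /riso_sym.
  exact: riso_trans (riso_root_label tG).
rewrite /num_unlabelled_trees -[n in _ * n]card_ord -cardsT -cardsX.
apply/subset_leq_card/fintype.subsetP => _ /imsetP[G GS ->].
by apply/setXP; split=> //; apply: imset_f; rewrite inE SP.
Qed.

Lemma num_unlabelled_trees_le n (P Q : pred (graph n)) :
  (forall G, is_tree G -> P G -> Q G) -> num_unlabelled_trees P <= num_unlabelled_trees Q.
Proof.
move=> PQ; apply/subset_leq_card/imsetS/fintype.subsetP => G.
by rewrite !inE => /andP[tG /(PQ _ tG) ->]; rewrite tG.
Qed.

Lemma deg_rglue_root a b (G : graph a * 'I_a) (H : graph b * 'I_b) :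
  deg (rglue G H).1 (rglue G H).2 = (deg G.1 G.2).+1.
Proof. by rewrite deg_glue_l eqxx addn1. Qed.

Lemma max_deg_rglue a b (G : graph a * 'I_a) (H : graph b * 'I_b) D :
  max_deg_le G.1 D -> max_deg_le H.1 D -> deg G.1 G.2 < D -> deg H.1 H.2 < D ->
  max_deg_le (rglue G H).1 D.
Proof.
move=> /forallP dG /forallP dH rG rH; apply/forallP => p.
case: (split_ordP p) => [x|y] ->; rewrite ?deg_glue_l ?deg_glue_r.
  by case: eqP => [->|_]; rewrite ?addn1 ?addn0.
by case: eqP => [->|_]; rewrite ?addn1 ?addn0.
Qed.

Lemma nleaves_off_le n (G : graph n) r : nleaves_off G r <= nleaves G.
Proof. by apply/subset_leq_card/fintype.subsetP => x; rewrite !inE => /andP[]. Qed.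

Lemma deg_le n (G : graph n) x : deg G x <= n.
Proof. by rewrite -[n in _ <= n]card_ord max_card. Qed.

Definition rpoint : graph 1 * 'I_1 := ([ffun => false], ord0).

Lemma deg_rpoint x : deg rpoint.1 x = 0.
Proof. by apply: eq_card0 => y; rewrite !inE /adj ffunE. Qed.

Lemma max_deg_rpoint D : max_deg_le rpoint.1 D.
Proof. by apply/forallP => x; rewrite deg_rpoint. Qed.

Lemma rpoint_tree : is_tree rpoint.1.
Proof.
apply/treeP; split.
- by apply/simple_graphP; split=> [x|x y]; rewrite /adj !ffunE.
- by move=> x y; rewrite (ord1 x) (ord1 y) connect0.
- by move=> [|x [|y c]] //= _; rewrite /ucycleb /= /adj ffunE.
Qed.

Fixpoint rpath s : graph s.+1 * 'I_s.+1 :=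
  if s is s'.+1 then rglue rpoint (rpath s') else rpoint.

Lemma rpath_spec s :
  [/\ is_tree (rpath s).1, max_deg_le (rpath s).1 2 & deg (rpath s).1 (rpath s).2 <= 1].
Proof.
elim: s => [|s [t d r]].
  by split; [exact: rpoint_tree | exact: max_deg_rpoint | rewrite deg_rpoint].
rewrite [rpath _]/=; split; first exact: (@rglue_tree 1 s.+1 _ _ rpoint_tree t).
  by apply: (@max_deg_rglue 1 s.+1); rewrite ?max_deg_rpoint ?deg_rpoint.
by rewrite (@deg_rglue_root 1 s.+1) deg_rpoint.
Qed.

Definition redge := rglue rpoint rpoint.

Definition bead k (T : graph k * 'I_k) := rglue redge T.

Definition rooted_trees k := [set T : graph k * 'I_k | is_tree T.1].

Lemma bead_spec k (T : graph k * 'I_k) : is_tree T.1 ->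
  [/\ is_tree (bead T).1, max_deg_le (bead T).1 (k + 4), deg (bead T).1 (bead T).2 = 2
    & 0 < nleaves_off (bead T).1 (bead T).2].
Proof.
move=> tT; have tE : is_tree redge.1 := rglue_tree rpoint_tree rpoint_tree.
have dE : max_deg_le redge.1 (k + 4).
  by apply: max_deg_rglue; rewrite ?max_deg_rpoint ?deg_rpoint ?addn4.
split.
- exact: rglue_tree tE tT.
- apply: max_deg_rglue => //.
  + by apply/forallP => x; have := deg_le T.1 x; lia.
  + by rewrite deg_rglue_root deg_rpoint addn4.
  + by have := deg_le T.1 T.2; lia.
- by rewrite !deg_rglue_root deg_rpoint.
- by rewrite /bead nleaves_off_glue /redge nleaves_off_glue deg_rpoint eqxx addn1 -addnA.
Qed.

Fixpoint chain_size k s m := if m is m'.+1 then 1 + 1 + k + chain_size k s m' else s.+1.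

Fixpoint chains k s m : {set graph (chain_size k s m) * 'I_(chain_size k s m)} :=
  match m with
  | 0 => [set rpath s]
  | m'.+1 => [set rglue (bead T) P | T in rooted_trees k, P in chains k s m']
  end.

Lemma chain_sizeE k s m : chain_size k s m = s.+1 + m * k.+2.
Proof. by elim: m => [|m IHm] /=; rewrite ?addn0 // IHm mulSn; lia. Qed.

Lemma chains_spec k s m P : P \in chains k s m ->
  [/\ is_tree P.1, max_deg_le P.1 (k + 4), deg P.1 P.2 <= 3 & m <= nleaves_off P.1 P.2].
Proof.
elim: m P => [|m IHm] P /=.
  rewrite inE => /eqP ->; have [t /forallP d r] := rpath_spec s.
  split=> //; last exact: leq_trans r _.
  by apply/forallP => x; apply: leq_trans (d x) _; rewrite addn4.
case/imset2P => T P' /[!inE] tT /IHm[tP dP rP lP] ->.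
have [tB dB rB lB] := bead_spec tT.
split.
- exact: rglue_tree.
- apply: max_deg_rglue => //.
  + by rewrite rB addn4.
  + by apply: leq_ltn_trans rP _; rewrite addn4.
- by rewrite deg_rglue_root rB.
- rewrite nleaves_off_glue; apply: leq_trans (leq_addr _ _).
  by rewrite addnC -addn1; exact: leq_add lP lB.
Qed.

Lemma rglue_bead_riso_inv k b (T T' : graph k * 'I_k) (P P' : graph b * 'I_b) :
  2 < k -> k.+2 < b -> is_tree T.1 -> is_tree P.1 ->
  rooted_isomorphic (rglue (bead T) P) (rglue (bead T') P') ->
  rooted_isomorphic T T' /\ rooted_isomorphic P P'.
Proof.
move=> k_gt2 kb tT tP /(rglue_riso_inv kb tP)[/(rglue_riso_inv k_gt2 tT)[_ TT'] PP'].
by split.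
Qed.

Lemma card_rooted_classes_bead k b (B : {set graph b * 'I_b}) :
  2 < k -> k.+2 < b -> (forall P, P \in B -> is_tree P.1) ->
  #|rooted_class @: rooted_trees k| * #|rooted_class @: B| <=
  #|rooted_class @: [set rglue (bead T) P | T in rooted_trees k, P in B]|.
Proof.
move=> k_gt2 kb tB; rewrite -cardsX curry_imset2X -imset_comp.
pose classes (TP : (graph k * 'I_k) * (graph b * 'I_b)) :=
  (rooted_class TP.1, rooted_class TP.2).
apply: leq_trans (card_imset_factor (f := classes) _).
  apply/subset_leq_card/fintype.subsetP => -[_ _] /setXP[/imsetP[T tT ->] /imsetP[P tP ->]].
  by apply/imsetP; exists (T, P) => //; apply/setXP.
move=> [T P] [T' P'] /setXP[+ tP] /setXP[+ tP'] /= eq_cl; rewrite !inE => tT tT'.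
have: rooted_isomorphic (rglue (bead T) P) (rglue (bead T') P').
  have [tBT' _ _ _] := bead_spec tT'.
  exact: rooted_class_inj (rglue_tree tBT' (tB P' tP')) eq_cl.
case/(rglue_bead_riso_inv k_gt2 kb tT (tB P tP)) => TT' PP'.
by rewrite /classes (rooted_class_eq TT') (rooted_class_eq PP').
Qed.

(* The spine [rpath s] is larger than a bead, so that [rglue_riso_inv] can
   split off the beads one at a time. *)
Lemma card_rooted_classes_chains k s m : 2 < k -> k.+2 <= s ->
  #|rooted_class @: rooted_trees k| ^ m <= #|rooted_class @: chains k s m|.
Proof.
move=> k_gt2 ks; elim: m => [|m IHm]; first by rewrite imset_set1 cards1.
rewrite expnS; apply: leq_trans (card_rooted_classes_bead k_gt2 _ _).
- by rewrite leq_mul2l IHm orbT.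
- by change (k.+2 < chain_size k s m); rewrite chain_sizeE; lia.
- by move=> P /chains_spec[].
Qed.

Lemma rooted_trees_pow_le k m n : 2 < k -> m.+1 * k.+2 < n ->
  num_rooted_trees k ^ m <=
  num_unlabelled_trees (fun G : graph n => max_deg_le G (k + 4) && (m <= nleaves G)) * n.
Proof.
move=> k_gt2 mn; have [s ks ->] : exists2 s, k.+2 <= s & n = chain_size k s m.
  by exists (n.-1 - m * k.+2); rewrite ?chain_sizeE; lia.
apply: leq_trans (card_rooted_classes_chains m k_gt2 ks) _.
apply: card_rooted_classes_le => P /chains_spec[tP dP _ lP]; rewrite tP dP /=.
exact: leq_trans lP (nleaves_off_le _ _).
Qed.

Lemma mul_sandwich d n : 0 < d -> d < n -> exists2 m, m.+1 * d < n & n <= m.+2 * d.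
Proof.
move=> d0 dn; have := divn_eq n.-1 d; have := ltn_pmod n.-1 d0.
have : 0 < n.-1 %/ d by rewrite divn_gt0 //; lia.
move: (n.-1 %/ d) (n.-1 %% d) => q r q0 r_lt n_eq; exists q.-1; nia.
Qed.

Local Open Scope classical_set_scope.
Local Open Scope ring_scope.

Section Growth.
Variable R : realType.

Lemma powR_invnK (A : R) k : 0 <= A -> (0 < k)%N -> (A `^ k%:R^-1) ^+ k = A.
Proof.
move=> A0 k0; rewrite -powR_mulrn ?powR_ge0 // -powRrM mulVf ?powRr1 //.
by rewrite pnatr_eq0 -lt0n.
Qed.

Lemma root_cvg_geometric_le (u : nat -> R) (alpha q C : R) :
  (forall k, 0 <= u k) -> (fun k => u k `^ k%:R^-1) @ \oo --> alpha ->
  0 < q -> q < alpha -> 0 < C -> \forall k \near \oo, C * q ^+ k <= u k.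
Proof.
move=> u0 u_cvg q0 q_alpha C0; pose b := (q + alpha) / 2.
have qb : q < b by rewrite /b; lra.
have b_alpha : b < alpha by rewrite /b; lra.
have b0 : 0 < b by apply: lt_trans qb.
have qb1 : `|q / b| < 1.
  rewrite ger0_norm; last by rewrite divr_ge0 // ltW.
  by rewrite ltr_pdivrMr // mul1r.
near=> k.
have small : C * (q / b) ^+ k <= 1.
  rewrite -ler_pdivlMl // mulr1; apply: ltW; near: k.
  by apply: (cvgr_lt _ (cvg_expr qb1)); rewrite invr_gt0.
have big : b ^+ k <= u k.
  rewrite -[u k](powR_invnK (u0 k) (_ : 0 < k)%N); last by near: k; exact: nbhs_infty_ge.
  apply: lerXn2r; [by rewrite nnegrE ltW | by rewrite nnegrE powR_ge0 | apply: ltW].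
  by near: k; exact: cvgr_gt _ u_cvg _ b_alpha.
rewrite (_ : C * q ^+ k = C * (q / b) ^+ k * b ^+ k); last first.
  by rewrite -mulrA -exprMn divfK ?gt_eqF.
by apply: le_trans big; rewrite -[leRHS]mul1r ler_pM2r ?exprn_gt0.
Unshelve. all: by end_near.
Qed.

Lemma geometric_linear_le (q A : R) k : 0 < q -> 4 * q ^+ k.+2 <= A ->
  exists M, forall m n, (M <= m)%N -> (m * k.+2 <= n <= m.+2 * k.+2)%N ->
    q ^+ n * n%:R <= A ^+ m.
Proof.
move=> q0 qA; pose c := (1 + q) ^+ (k.+2).*2.
have c0 : 0 <= c by rewrite exprn_ge0 // addr_ge0 // ltW.
have [M _ HM] := nbhs_infty_ger (2 * c * k.+2%:R).
exists M => m n Mm /andP[lo hi].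
have A0 : 0 <= A by apply: le_trans _ qA; rewrite mulr_ge0 ?exprn_ge0 ?ltW.
have geom : 4 ^+ m * q ^+ (m * k.+2) <= A ^+ m.
  rewrite mulnC exprM -exprMn; apply: lerXn2r => //.
  by rewrite nnegrE mulr_ge0 ?exprn_ge0 ?ltW.
have rest : q ^+ (n - m * k.+2) <= c.
  apply: (@le_trans _ _ ((1 + q) ^+ (n - m * k.+2))).
    by apply: lerXn2r; rewrite ?nnegrE ?addr_ge0 ?ltW //; lra.
  by apply: ler_weXn2l; [lra | lia].
have four : m.+1%:R ^+ 2 <= 4 ^+ m :> R.
  have nat_four : (m.+1 ^ 2 <= 4 ^ m)%N.
    by rewrite -[4%N]/(2 ^ 2)%N -expnM mulnC expnM leq_exp2r // ltn_expl.
  by rewrite -(ler_nat R) !natrX in nat_four.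
have step : q ^+ (n - m * k.+2) * n%:R <= c * (m.+2%:R * k.+2%:R).
  apply: ler_pM; [exact: exprn_ge0 (ltW q0) | exact: ler0n | exact: rest |].
  by rewrite -natrM ler_nat.
have MR : 2 * c * k.+2%:R <= m%:R := HM m Mm.
rewrite (_ : q ^+ n = q ^+ (n - m * k.+2) * q ^+ (m * k.+2)); last by rewrite -exprD subnK.
rewrite mulrAC; apply: le_trans geom; rewrite ler_pM2r ?exprn_gt0 //.
apply: le_trans step (le_trans _ four); rewrite mulrCA; rewrite -mulrA in MR.
have X0 : 0 <= c * k.+2%:R by rewrite mulr_ge0.
rewrite -[m.+2%:R]natr1 -[m.+1%:R]natr1.
by move: (c * _) (m%:R : R) X0 MR (ler0n R m) => X W; nra.
Qed.

End Growth.

Theorem lemma2p3 (R : realType) (alpha : R)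
  (Halpha : (fun k : nat => ((num_rooted_trees k)%:R : R) `^ (k%:R^-1)) @ \oo --> alpha)
  (eps : R) (Heps0 : 0 < eps) (Heps : eps < alpha) :
  exists (Delta : nat) (rho : R), 0 < rho /\
    \forall n \near \oo,
      (alpha - eps) ^+ n <=
      (num_unlabelled_trees (fun G : graph n =>
          max_deg_le G Delta && (rho * n%:R <= (nleaves G)%:R)))%:R.
Proof.
set q := alpha - eps; have q0 : 0 < q by rewrite subr_gt0.
have q_alpha : q < alpha by rewrite /q; lra.
have [k k_gt2 a_k] : exists2 k, (2 < k)%N & 4 * q ^+ k.+2 <= (num_rooted_trees k)%:R.
  have C0 : 0 < 4 * q ^+ 2 by rewrite mulr_gt0 ?exprn_gt0.
  have [N _ HN] := root_cvg_geometric_le (fun k => ler0n R _) Halpha q0 q_alpha C0.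
  exists (N + 3)%N; first lia.
  by rewrite -[(N + 3).+2]add2n exprD mulrA HN //= leq_addr.
have [M HM] := geometric_linear_le q0 a_k.
exists (k + 4)%N, (3 * k.+2)%:R^-1; split; first by rewrite invr_gt0 ltr0n.
exists (M.+2 * k.+2).+1 => // n /= n_big.
have kn : (k.+2 < n)%N by nia.
have [m lo hi] := mul_sandwich (ltn0Sn k.+1) kn.
have Mm : (M < m)%N by nia.
have rho_n : (3 * k.+2)%:R^-1 * n%:R <= m%:R :> R.
  by rewrite ler_pdivrMl ?ltr0n // -natrM ler_nat; nia.
rewrite -(ler_pM2r (_ : 0 < n%:R)) ?ltr0n; last by lia.
apply: le_trans (HM m n (ltnW Mm) _) _; first by apply/andP; split; nia.
rewrite -natrX -natrM ler_nat; apply: leq_trans (rooted_trees_pow_le k_gt2 lo) _.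
rewrite leq_mul2r; apply/orP; right; apply: num_unlabelled_trees_le => G _ /andP[-> m_le].
by apply: le_trans rho_n _; rewrite ler_nat.
Qed.
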